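(* Consider a GNEP with $N$ players in which player $\nu$ has constraint function $c^\nu:\mathbb{R}^n\to\mathbb{R}^{r_\nu}$ (continuously differentiable). Let $\nu$ be a given index, let $x\in\mathbb{R}^n$ with $c^\nu(x)\le0$, and assume that $c^\nu$ satisfies MFCQ$_\nu$ in $x$. Then: (a) There is a neighbourhood $U$ of $x$ such that, for every $y\in U$, the set $X_\nu(y^{-\nu})$ is nonempty. (b) Given $\varepsilon>0$, there is a neighbourhood $U$ of $x$ such that for every $y\in U$ there is a point $z^\nu\in X_\nu(y^{-\nu})$ with $\|z^\nu-y^\nu\|\le\varepsilon$.
   Context: Variables: $x=(x^1,\ldots,x^N)\in\mathbb{R}^n$, $x^\nu\in\mathbb{R}^{n_\nu}$, written $x=(x^\nu,x^{-\nu})$ where $x^{-\nu}$ collects the other blocks. $X_\nu(x^{-\nu})=\{x^\nu\in\mathbb{R}^{n_\nu}: c^\nu(x^\nu,x^{-\nu})\le 0\}$. $\nabla_{x^\nu}c_i^\nu$ denotes the partial gradient with respect to $x^\nu$. MFCQ$_\nu$ at a point $x$ with $c^\nu(x)\le0$: there is $d^\nu\in\mathbb{R}^{n_\nu}$ with $\nabla_{x^\nu}c_i^\nu(x)^Td^\nu<0$ for every $i$ with $c_i^\nu(x)=0$ (equivalently, for every $i$ with $c_i^\nu(x)\ge 0$). Norms are Euclidean. *)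

From HB Require Import structures.
From mathcomp Require Import all_boot all_order all_algebra.
From mathcomp Require Import all_classical all_reals all_analysis.
Set Implicit Arguments. Unset Strict Implicit. Unset Printing Implicit Defensive.
Import Order.TTheory GRing.Theory Num.Theory.
Import numFieldNormedType.Exports.
Local Open Scope classical_set_scope.
Local Open Scope ring_scope.

(* Fixed player nu.  The full variable space R^n is split as
   R^n = R^{n_nu} x R^{n - n_nu}, a point being  x = row_mx x^nu x^{-nu},
   with  x^nu = lsubmx x  and  x^{-nu} = rsubmx x.  *)

Definition enorm (R : realType) (k : nat) (v : 'rV[R]_k) : R :=
  Num.sqrt (\sum_(i < k) v 0 i ^+ 2).

(* Continuously differentiable real function on R^m: differentiable
   everywhere, with continuous derivative (in finite dimension: x |-> Df(x) v
   continuous for every direction v). *)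
Definition C1 (R : realType) (m : nat) (f : 'rV[R]_m -> R) : Prop :=
  (forall y, differentiable f y) /\
  (forall v : 'rV[R]_m, continuous (fun y => 'd f y v)).

Definition Xnu (R : realType) (p q r : nat) (c : 'I_r -> 'rV[R]_(p + q) -> R)
  (ymnu : 'rV[R]_q) : set 'rV[R]_p :=
  [set z | forall i, c i (row_mx z ymnu) <= 0].

(* grad_{x^nu} c_i(x)^T d, i.e. the derivative of c_i at x in direction (d,0). *)
Definition pgrad_dot (R : realType) (p q : nat) (f : 'rV[R]_(p + q) -> R)
  (x : 'rV[R]_(p + q)) (d : 'rV[R]_p) : R :=
  'd f x (row_mx d 0).

Definition MFCQ (R : realType) (p q r : nat) (c : 'I_r -> 'rV[R]_(p + q) -> R)
  (x : 'rV[R]_(p + q)) : Prop :=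
  exists d : 'rV[R]_p, forall i, c i x = 0 -> pgrad_dot (c i) x d < 0.

(** Move the own variables of player nu along the MFCQ direction d.  For small
    t > 0 every constraint is strictly negative at x + t (d, 0): the active ones
    because their directional derivative is negative, the inactive ones by
    continuity.  Strict inequalities persist for y near x, so
    z = y^nu + t d lies in X_nu(y^{-nu}), and ||z - y^nu|| = t ||d|| is as small
    as we like. *)
From HB Require Import structures.
From mathcomp Require Import all_boot all_order all_algebra.
From mathcomp Require Import all_classical all_reals all_analysis.
Import Order.TTheory GRing.Theory Num.Theory.
Import numFieldNormedType.Exports.
Local Open Scope classical_set_scope.
Local Open Scope ring_scope.

Section NormedDescent.

Context {R : realType} {V : normedModType R}.

Lemma cvg_scale_add (D x : V) : (fun t : R => t *: D + x) @ 0 --> x.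
Proof.
rewrite -[x in _ --> x]add0r -[X in X + _](scale0r D).
by apply: cvgD; [exact: cvgZr_tmp cvg_id | exact: cvg_cst].
Qed.

Lemma cvg_addl (a x : V) : (fun y : V => a + y) @ x --> a + x.
Proof. by apply: cvgD; [exact: cvg_cst | exact: cvg_id]. Qed.

Lemma near_lt0_comp {T : Type} {F : set_system T} {FF : Filter F}
    {h : T -> V} {z : V} {f : V -> R} :
  h @ F --> z -> {for z, continuous f} -> f z < 0 ->
  \forall w \near F, f (h w) < 0.
Proof.
by move=> hz fz fz_lt0; exact: cvgr_lt _ (cvg_comp _ _ hz fz) _ fz_lt0.
Qed.

Lemma near0_descent_active (f : V -> R) (x D : V) :
  differentiable f x -> f x = 0 -> 'd f x D < 0 ->
  \forall t \near 0^'+, f (t *: D + x) < 0.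
Proof.
move=> df fx0 dD_lt0.
have /cvgP := diff_derivable (v := D) df.
rewrite -/(derive _ _ _) (deriveE _ df) => quot_cvg.
have : \forall t \near 0^', t^-1 *: ((f \o shift x) (t *: D) - f x) < 0.
  exact: cvgr_lt _ quot_cvg _ dD_lt0.
rewrite !near_withinE; apply: filterS => t quot_lt0 t_gt0.
have := quot_lt0 (lt0r_neq0 t_gt0); rewrite /= fx0 subr0.
by rewrite pmulr_rlt0 ?invr_gt0.
Qed.

Lemma near0_descent (f : V -> R) (x D : V) :
  differentiable f x -> f x <= 0 -> (f x = 0 -> 'd f x D < 0) ->
  \forall t \near 0^'+, f (t *: D + x) < 0.
Proof.
move=> df; rewrite le_eqVlt => /orP[/eqP fx0 /(_ fx0) dD_lt0 | fx_lt0 _].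
  exact: near0_descent_active.
have near0 : \forall t \near 0, f (t *: D + x) < 0.
  exact: near_lt0_comp (cvg_scale_add D x) (differentiable_continuous df) fx_lt0.
by rewrite near_withinE; apply: filterS near0 => t + _.
Qed.

End NormedDescent.

Lemma enormZ (R : realType) (k : nat) (t : R) (v : 'rV[R]_k) :
  enorm (t *: v) = `|t| * enorm v.
Proof.
rewrite /enorm; under eq_bigr do rewrite mxE exprMn.
by rewrite -mulr_sumr sqrtrM ?sqr_ge0 // sqrtr_sqr.
Qed.

Lemma row_mx_lsubmx_add (R : pzRingType) (p q : nat) (t : R)
    (d : 'rV[R]_p) (y : 'rV[R]_(p + q)) :
  row_mx (lsubmx y + t *: d) (rsubmx y) = t *: row_mx d 0 + y.
Proof.
by rewrite scale_row_mx scaler0 -{3}(hsubmxK y) add_row_mx add0r addrC.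
Qed.

Lemma Xnu_near_feasible {R : realType} {p q r : nat}
    {c : 'I_r -> 'rV[R]_(p + q) -> R} {x : 'rV[R]_(p + q)} :
  (forall i y, differentiable (c i) y) ->
  (forall i, c i x <= 0) ->
  MFCQ c x ->
  forall eps : R, 0 < eps ->
    exists U : set 'rV[R]_(p + q), nbhs x U /\
      forall y, U y -> exists z, Xnu c (rsubmx y) z /\ enorm (z - lsubmx y) <= eps.
Proof.
move=> dc cx_le0 [d mfcq] eps eps_gt0.
set D : 'rV[R]_(p + q) := row_mx d 0.
have nd_gt0 : 0 < enorm d + 1 by rewrite ltr_wpDl ?sqrtr_ge0.
have descent : \forall t \near 0^'+, forall i, c i (t *: D + x) < 0.
  by apply: filter_forall => i; exact: near0_descent (dc i x) (cx_le0 i) (mfcq i).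
have t_small : \forall t \near (0 : R)^'+, t < eps / (enorm d + 1).
  by apply: nbhs_right_lt; rewrite divr_gt0.
have [t [[ct_lt0 t_lt] t_gt0]] :=
  filter_ex (filterI (filterI descent t_small) (@nbhs_right_gt R 0)).
exists [set y | forall i, c i (t *: D + y) < 0]; split.
  apply: (@filter_forall _ _ (fun i y => c i (t *: D + y) < 0) (nbhs x) _) => i.
  exact: near_lt0_comp (cvg_addl (t *: D) x)
    (differentiable_continuous (dc i _)) (ct_lt0 i).
move=> y cy_lt0; exists (lsubmx y + t *: d); split.
  by move=> i; rewrite /= row_mx_lsubmx_add; exact: ltW.
rewrite addrC addKr enormZ gtr0_norm // (@le_trans _ _ (t * (enorm d + 1))) //.
  by rewrite ler_pM2l // lerDl.
by rewrite -ler_pdivlMr // ltW.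
Qed.

Theorem lemma2p9 (R : realType) (p q r : nat)
  (c : 'I_r -> 'rV[R]_(p + q) -> R) (x : 'rV[R]_(p + q)) :
  (forall i, C1 (c i)) ->
  (forall i, c i x <= 0) ->
  MFCQ c x ->
  (exists U : set 'rV[R]_(p + q), nbhs x U /\
     forall y, U y -> Xnu c (rsubmx y) !=set0) /\
  (forall eps : R, 0 < eps ->
     exists U : set 'rV[R]_(p + q), nbhs x U /\
       forall y, U y -> exists z, Xnu c (rsubmx y) z /\ enorm (z - lsubmx y) <= eps).
Proof.
move=> c_C1 cx_le0 mfcq.
have feasible := Xnu_near_feasible (fun i => (c_C1 i).1) cx_le0 mfcq.
split; last exact: feasible.
have [U [nU HU]] := feasible 1 ltr01.
exists U; split; first exact: nU.
by move=> y /HU[z [Xz _]]; exists z.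
Qed.
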